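(* Let $S$ be a $\phi$-calibrated surrogate with potential $h:\mathcal{D}\to\mathbb{R}$, assume $\psi$ is injective, and suppose $h$ is $(1/\beta)$-strongly convex on $\mathcal{D}$ with respect to $\|\cdot\|_2$. Then for all $\varepsilon\ge0$, $$\zeta_h(\varepsilon)\ge\frac{\varepsilon^2}{2\beta\max_{z\neq z'}\|\psi(z)-\psi(z')\|_2^2}.$$
   Context: $\mathcal{Y},\mathcal{Z}$ finite sets ($|\mathcal{Z}|\ge2$), $\mathcal{H}$ a finite-dimensional real Euclidean space, $\psi:\mathcal{Z}\to\mathcal{H}$, $\phi:\mathcal{Y}\to\mathcal{H}$, $c\in\mathbb{R}$, $L(z,y)=\langle\psi(z),\phi(y)\rangle+c$. $\mu(q)=\sum_y q(y)\phi(y)$, $\mathcal{M}=\operatorname{hull}(\phi(\mathcal{Y}))$, $\ell(z,q)=\mathbb{E}_{Y\sim q}L(z,Y)$, $\delta\ell(z,q)=\ell(z,q)-\min_{z'}\ell(z',q)$. $z(u)$ is an element of $\arg\min_z\langle\psi(z),u\rangle$ (fixed tie-breaking). For $S:\mathcal{V}\times\mathcal{Y}\to\mathbb{R}$: $s(v,q)=\mathbb{E}_{Y\sim q}S(v,Y)$, $\delta s(v,q)=s(v,q)-\inf_{v'}s(v',q)$. $D_h(u',u)=h(u')-h(u)-\langle u'-u,\nabla h(u)\rangle$. $S$ is $\phi$-calibrated with potential $h$ if there exist convex $\mathcal{D}\supseteq\mathcal{M}$, strictly convex differentiable $h:\mathcal{D}\to\mathbb{R}$ and continuous bijection $t:\mathcal{D}\to\mathcal{V}$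 with $\delta s(v,q)=D_h(\mu(q),t^{-1}(v))$ for all $v,q$. Decoding $d(v)=z(t^{-1}(v))$; $\zeta_h(\varepsilon)=\inf\{\delta s(v,q):\delta\ell(d(v),q)\ge\varepsilon\}$. Strong convexity: $h(u)\ge h(v)+\langle u-v,\nabla h(v)\rangle+\frac1{2\beta}\|u-v\|_2^2$ for $u,v\in\mathcal{D}$. *)

From mathcomp Require Import all_boot.
From Stdlib Require Import Reals.
Set Implicit Arguments. Unset Strict Implicit. Unset Printing Implicit Defensive.
Open Scope R_scope.

Definition rsum (T : finType) (f : T -> R) : R := \big[Rplus/0]_(i : T) f i.

(* Minimum of a real function over a finite type (meaningful when T is nonempty;
   default 0 when T is empty). *)
Definition rmin (T : finType) (f : T -> R) : R :=
  match enum T with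
  | [::] => 0
  | x :: _ => \big[Rmin/f x]_(i : T) f i
  end.

Definition vec (n : nat) := 'I_n -> R.
Definition inner (n : nat) (u v : vec n) : R := rsum (fun i => u i * v i).
Definition norm2sq (n : nat) (u : vec n) : R := inner u u.
Definition norm2 (n : nat) (u : vec n) : R := sqrt (norm2sq u).
Definition vadd (n : nat) (u v : vec n) : vec n := fun i => u i + v i.
Definition vsub (n : nat) (u v : vec n) : vec n := fun i => u i - v i.
Definition vscale (n : nat) (a : R) (u : vec n) : vec n := fun i => a * u i.

Definition is_dist (Y : finType) (q : Y -> R) : Prop :=
  (forall y, 0 <= q y) /\ rsum q = 1.

Definition mu (Y : finType) (n : nat) (phi : Y -> vec n) (q : Y -> R) : vec n :=
  fun i => rsum (fun y => q y * phi y i).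

Definition in_hull (Y : finType) (n : nat) (phi : Y -> vec n) (u : vec n) : Prop :=
  exists q, is_dist q /\ u = mu phi q.

Definition Lloss (Y Z : finType) (n : nat) (psi : Z -> vec n) (phi : Y -> vec n)
  (c : R) (z : Z) (y : Y) : R := inner (psi z) (phi y) + c.
Definition ell (Y Z : finType) (n : nat) (psi : Z -> vec n) (phi : Y -> vec n)
  (c : R) (z : Z) (q : Y -> R) : R := rsum (fun y => q y * Lloss psi phi c z y).
Definition dell (Y Z : finType) (n : nat) (psi : Z -> vec n) (phi : Y -> vec n)
  (c : R) (z : Z) (q : Y -> R) : R :=
  ell psi phi c z q - rmin (fun z' => ell psi phi c z' q).

(* Surrogate: expected surrogate loss and its regret.  The infimum over the
   report set V is expressed relationally (it need not be attained). *)
Definition sexp (V : Type) (Y : finType) (S : V -> Y -> R) (v : V) (q : Y -> R) : R :=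
  rsum (fun y => q y * S v y).
Definition is_inf (P : R -> Prop) (m : R) : Prop :=
  (forall x, P x -> m <= x) /\ (forall m', (forall x, P x -> m' <= x) -> m' <= m).
(* dsurr S v q x  <->  delta s(v,q) is defined (finite) and equals x. *)
Definition dsurr (V : Type) (Y : finType) (S : V -> Y -> R) (v : V) (q : Y -> R)
  (x : R) : Prop :=
  exists m, is_inf (fun w => exists v', w = sexp S v' q) m /\ x = sexp S v q - m.

Definition breg (n : nat) (h : vec n -> R) (gh : vec n -> vec n) (u' u : vec n) : R :=
  h u' - h u - inner (vsub u' u) (gh u).

Definition convex_set (n : nat) (D : vec n -> Prop) : Prop :=
  forall u v (a : R), D u -> D v -> 0 <= a <= 1 ->
    D (vadd (vscale a u) (vscale (1 - a) v)).
Definition strictly_convex_on (n : nat) (D : vec n -> Prop) (h : vec n -> R) : Prop :=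
  forall u v (a : R), D u -> D v -> u <> v -> 0 < a < 1 ->
    h (vadd (vscale a u) (vscale (1 - a) v)) < a * h u + (1 - a) * h v.
Definition differentiable_on (n : nat) (D : vec n -> Prop) (h : vec n -> R)
  (gh : vec n -> vec n) : Prop :=
  forall u, D u -> forall eps, 0 < eps -> exists del, 0 < del /\
    forall u', D u' -> norm2 (vsub u' u) < del ->
      Rabs (h u' - h u - inner (vsub u' u) (gh u)) <= eps * norm2 (vsub u' u).
Definition strongly_convex_on (n : nat) (D : vec n -> Prop) (h : vec n -> R)
  (gh : vec n -> vec n) (beta : R) : Prop :=
  forall u v, D u -> D v ->
    h u >= h v + inner (vsub u v) (gh v) + / (2 * beta) * norm2sq (vsub u v).

Definition is_topology (V : Type) (openV : (V -> Prop) -> Prop) : Prop :=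
  openV (fun _ => True) /\ openV (fun _ => False) /\
  (forall A B, openV A -> openV B -> openV (fun x => A x /\ B x)) /\
  (forall (F : (V -> Prop) -> Prop), (forall A, F A -> openV A) ->
     openV (fun x => exists A, F A /\ A x)).
Definition open_euclid (n : nat) (O : vec n -> Prop) : Prop :=
  forall u, O u -> exists r, 0 < r /\ forall w, norm2 (vsub w u) < r -> O w.
Definition continuous_on (n : nat) (V : Type) (openV : (V -> Prop) -> Prop)
  (D : vec n -> Prop) (t : vec n -> V) : Prop :=
  forall O, openV O -> exists O', open_euclid O' /\ forall u, D u -> (O (t u) <-> O' u).

Definition bij_with_inv (n : nat) (V : Type) (D : vec n -> Prop) (t : vec n -> V)
  (tinv : V -> vec n) : Prop :=
  (forall v, D (tinv v) /\ t (tinv v) = v) /\ (forall u, D u -> tinv (t u) = u).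

Definition is_argmin_sel (Z : finType) (n : nat) (psi : Z -> vec n) (zsel : vec n -> Z)
  : Prop := forall u z', inner (psi (zsel u)) u <= inner (psi z') u.

(* S is phi-calibrated with potential h (witnessed by D, gradient gh, link t). *)
Definition phi_calibrated (V : Type) (openV : (V -> Prop) -> Prop) (Y : finType)
  (n : nat) (phi : Y -> vec n) (S : V -> Y -> R) (D : vec n -> Prop)
  (h : vec n -> R) (gh : vec n -> vec n) (t : vec n -> V) (tinv : V -> vec n) : Prop :=
  convex_set D /\ (forall u, in_hull phi u -> D u) /\
  strictly_convex_on D h /\ differentiable_on D h gh /\
  continuous_on openV D t /\ bij_with_inv D t tinv /\
  (forall v q, is_dist q -> dsurr S v q (breg h gh (mu phi q) (tinv v))).

(* The set whose infimum is zeta_h(eps), with decoding d(v) = z(t^{-1}(v)). *)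
Definition zeta_set (V : Type) (Y Z : finType) (n : nat) (psi : Z -> vec n)
  (phi : Y -> vec n) (c : R) (S : V -> Y -> R) (zsel : vec n -> Z)
  (tinv : V -> vec n) (eps : R) (x : R) : Prop :=
  exists v q, is_dist q /\ dell psi phi c (zsel (tinv v)) q >= eps /\ dsurr S v q x.

(* max over z <> z' of ||psi z - psi z'||^2 (values are >= 0, so 0 is a valid seed). *)
Definition maxpsidiff (Z : finType) (n : nat) (psi : Z -> vec n) : R :=
  \big[Rmax/0]_(p : Z * Z | p.1 != p.2) norm2sq (vsub (psi p.1) (psi p.2)).

(* Fix a report v and a distribution q with delta ell(d(v), q) >= eps, and put
   u = t^{-1}(v), m = mu(q), z = z(u), and z0 a minimiser of ell(., q).
   1. Calibration identifies the surrogate regret with the Bregman divergence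
      D_h(m, u), and (1/beta)-strong convexity gives D_h(m, u) >= ||m - u||^2/(2 beta).
   2. Since L is affine in phi, the target regret is <psi z - psi z0, m>, while
      the choice of z as a minimiser of <psi ., u> gives <psi z - psi z0, u> <= 0;
      hence eps <= <psi z - psi z0, m - u>.
   3. Cauchy-Schwarz bounds the square of that inner product by
      ||psi z - psi z0||^2 ||m - u||^2 <= M * 2 beta * D_h(m, u), where M is the
      largest squared distance between two values of psi. *)
From HB Require Import structures.
From mathcomp Require Import all_boot.
From Stdlib Require Import Reals Lra Psatz.
Open Scope R_scope.
Set Implicit Arguments. Unset Strict Implicit.

(* Real addition as a commutative monoid, so that the bigop lemmas apply to rsum. *)
HB.instance Definition _ := Monoid.isComLaw.Build R 0 Rplus
  (fun a b c => esym (Rplus_assoc a b c)) Rplus_comm Rplus_0_l.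

Lemma rsum_add (T : finType) (f g : T -> R) :
  rsum (fun i => f i + g i) = rsum f + rsum g.
Proof. by rewrite /rsum big_split. Qed.

Lemma rsum_scal (T : finType) (k : R) (f : T -> R) :
  rsum (fun i => k * f i) = k * rsum f.
Proof.
rewrite /rsum; symmetry; apply: (big_endo (fun x => k * x)).
- by move=> a b; rewrite Rmult_plus_distr_l.
- by rewrite Rmult_0_r.
Qed.

Lemma rsum_ext (T : finType) (f g : T -> R) :
  (forall i, f i = g i) -> rsum f = rsum g.
Proof. by move=> fg; rewrite /rsum; apply: eq_bigr => i _. Qed.

Lemma rsum_ge0 (T : finType) (f : T -> R) :
  (forall i, 0 <= f i) -> 0 <= rsum f.
Proof.
move=> f_ge0; rewrite /rsum; apply: (big_ind (fun x => 0 <= x)) => //; first lra.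
by move=> a b; lra.
Qed.

Lemma inner_sym (n : nat) (a b : vec n) : inner a b = inner b a.
Proof. by apply: rsum_ext => i; ring. Qed.

Lemma inner_sub_l (n : nat) (a b w : vec n) :
  inner (vsub a b) w = inner a w - inner b w.
Proof.
rewrite /inner (@rsum_ext _ _ (fun i => a i * w i + (-1) * (b i * w i))).
  by rewrite rsum_add rsum_scal; ring.
by move=> i; rewrite /vsub; ring.
Qed.

Lemma inner_sub_r (n : nat) (a b w : vec n) :
  inner w (vsub a b) = inner w a - inner w b.
Proof. by rewrite inner_sym inner_sub_l (inner_sym _ a) (inner_sym _ b). Qed.

Lemma norm2sq_ge0 (n : nat) (a : vec n) : 0 <= norm2sq a.
Proof. by apply: rsum_ge0 => i; nra. Qed.

Lemma norm2sq_sub_scale (n : nat) (a w : vec n) (s : R) :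
  norm2sq (vsub w (vscale s a)) = norm2sq w - 2 * s * inner a w + s * s * norm2sq a.
Proof.
rewrite /norm2sq /inner.
rewrite (@rsum_ext _ _ (fun i => w i * w i + (-2 * s) * (a i * w i) + (s * s) * (a i * a i))).
  by rewrite !rsum_add !rsum_scal; ring.
by move=> i; rewrite /vsub /vscale; ring.
Qed.

Lemma nonneg_quadratic_discr (A B C : R) :
  0 <= A -> (forall s, 0 <= C - 2 * s * B + s * s * A) -> B ^ 2 <= A * C.
Proof.
move=> A_ge0 nonneg.
have C_ge0 : 0 <= C by have := nonneg 0; lra.
have [A_gt0 | A_le0] := Rlt_or_le 0 A.
  have := nonneg (B / A).
  have -> : C - 2 * (B / A) * B + B / A * (B / A) * A = (A * C - B ^ 2) / A
    by field; lra.
  move=> quot_ge0.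
  have := Rmult_le_compat_r A _ _ (Rlt_le _ _ A_gt0) quot_ge0.
  by rewrite Rmult_0_l /Rdiv Rmult_assoc Rinv_l; lra.
have A0 : A = 0 by lra.
have [B0 | B_neq0] := Req_dec B 0; first by rewrite A0 B0; lra.
have := nonneg ((C + 1) / (2 * B)).
have -> : C - 2 * ((C + 1) / (2 * B)) * B + (C + 1) / (2 * B) * ((C + 1) / (2 * B)) * A = -1
  by rewrite A0; field.
lra.
Qed.

Lemma cauchy_schwarz (n : nat) (a w : vec n) :
  (inner a w) ^ 2 <= norm2sq a * norm2sq w.
Proof.
apply: nonneg_quadratic_discr; first exact: norm2sq_ge0.
move=> s.
by rewrite -norm2sq_sub_scale; apply: norm2sq_ge0.
Qed.

(* The target loss is affine in phi, so its expectation under a distribution q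
   depends on q only through mu(q). *)
Lemma ell_mu (Y Z : finType) (n : nat) (psi : Z -> vec n) (phi : Y -> vec n)
  (c : R) (z : Z) (q : Y -> R) :
  rsum q = 1 -> ell psi phi c z q = inner (psi z) (mu phi q) + c.
Proof.
move=> q_sum1; rewrite /ell /Lloss /inner /mu.
rewrite (@rsum_ext _ _ (fun y => rsum (fun i => psi z i * phi y i * q y) + c * q y)).
  rewrite rsum_add rsum_scal q_sum1 Rmult_1_r; congr (_ + _).
  rewrite /rsum exchange_big /=; apply: eq_bigr => i _.
  by rewrite -/(rsum _) -rsum_scal; apply: rsum_ext => y; ring.
move=> y; rewrite Rmult_plus_distr_l -rsum_scal; congr (_ + _); last ring.
by apply: rsum_ext => i; ring.
Qed.

Lemma rmin_attained (Z : finType) (f : Z -> R) :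
  leq 1 #|Z| -> exists z0, rmin f = f z0.
Proof.
rewrite /rmin cardE; case: (enum Z) => [|x s] //= _.
apply: (big_ind (fun r => exists z0, r = f z0)); first by exists x.
- move=> a b [za ->] [zb ->]; rewrite /Rmin.
  by case: (Rle_dec (f za) (f zb)) => _; [exists za | exists zb].
- by move=> i _; exists i.
Qed.

Lemma regret_le_link_gap (Y Z : finType) (n : nat) (psi : Z -> vec n)
  (phi : Y -> vec n) (c : R) (zsel : vec n -> Z) (q : Y -> R) (u : vec n) :
  leq 1 #|Z| -> is_argmin_sel psi zsel -> rsum q = 1 ->
  exists z0, dell psi phi c (zsel u) q
             <= inner (vsub (psi (zsel u)) (psi z0)) (vsub (mu phi q) u).
Proof.
move=> Z_nonempty argmin q_sum1.
have [z0 min_z0] := rmin_attained (fun z' => ell psi phi c z' q) Z_nonempty.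
exists z0; have := argmin u z0.
rewrite /dell min_z0 !ell_mu // inner_sub_r !inner_sub_l; lra.
Qed.

(* A term of a max-fold over a sequence is bounded by the fold (Rmax is not a
   monoid law here, since the seed 0 need not be neutral, so bigD1 does not apply). *)
Lemma bigRmax_ge (I : eqType) (r : seq I) (P : pred I) (F : I -> R) (j : I) :
  j \in r -> P j -> F j <= \big[Rmax/0]_(i <- r | P i) F i.
Proof.
elim: r => [|a r IH] //=; rewrite in_cons big_cons => /orP [/eqP -> -> | j_in_r Pj].
  exact: Rmax_l.
case: (P a); last exact: IH.
by apply: Rle_trans (IH j_in_r Pj) _; apply: Rmax_r.
Qed.

Lemma maxpsidiff_ge (Z : finType) (n : nat) (psi : Z -> vec n) (z z0 : Z) :
  norm2sq (vsub (psi z) (psi z0)) <= maxpsidiff psi.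
Proof.
rewrite /maxpsidiff.
case: (eqVneq z z0) => [<- | z_neq_z0].
  have -> : norm2sq (vsub (psi z) (psi z)) = 0.
    by rewrite /norm2sq /inner /rsum big1 // => i _; rewrite /vsub; ring.
  apply: (big_ind (fun x => 0 <= x)); first lra.
  - by move=> a b a_ge0 _; apply: Rle_trans a_ge0 (Rmax_l _ _).
  - by move=> p _; apply: norm2sq_ge0.
apply: (@bigRmax_ge _ _ _ (fun p : Z * Z => norm2sq (vsub (psi p.1) (psi p.2))) (z, z0)).
- by rewrite mem_index_enum.
- exact: z_neq_z0.
Qed.

Lemma is_inf_unique (P : R -> Prop) (m1 m2 : R) :
  is_inf P m1 -> is_inf P m2 -> m1 = m2.
Proof. by move=> [lb1 glb1] [lb2 glb2]; apply: Rle_antisym; [apply: glb2 | apply: glb1]. Qed.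

Lemma calibrated_regret_breg (V : Type) (openV : (V -> Prop) -> Prop) (Y : finType)
  (n : nat) (phi : Y -> vec n) (S : V -> Y -> R) (D : vec n -> Prop)
  (h : vec n -> R) (gh : vec n -> vec n) (t : vec n -> V) (tinv : V -> vec n)
  (v : V) (q : Y -> R) (x : R) :
  phi_calibrated openV phi S D h gh t tinv -> is_dist q -> dsurr S v q x ->
  x = breg h gh (mu phi q) (tinv v).
Proof.
case=> _ [_ [_ [_ [_ [_ regret]]]]] q_dist [m1 [inf1 ->]].
have [m2 [inf2 ->]] := regret v q q_dist.
by rewrite (is_inf_unique inf1 inf2).
Qed.

Lemma breg_ge_strongly_convex (n : nat) (D : vec n -> Prop) (h : vec n -> R)
  (gh : vec n -> vec n) (beta : R) (u' u : vec n) :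
  strongly_convex_on D h gh beta -> D u' -> D u ->
  norm2sq (vsub u' u) / (2 * beta) <= breg h gh u' u.
Proof. by move=> sc Du' Du; have := sc u' u Du' Du; rewrite /breg /Rdiv; lra. Qed.

(* Step 3, in real arithmetic: if eps <= C with C^2 <= P W, P <= M and
   W / (2 beta) <= x, then eps^2 / (2 beta M) <= x (with x / 0 = 0 when M = 0). *)
Lemma combine_bounds (eps C P W M beta x : R) :
  0 <= eps -> 0 < beta -> 0 <= P -> 0 <= W ->
  eps <= C -> C ^ 2 <= P * W -> P <= M -> W / (2 * beta) <= x ->
  eps ^ 2 / (2 * beta * M) <= x.
Proof.
move=> eps_ge0 beta_gt0 P_ge0 W_ge0 eps_le_C CS P_le_M W_le_x.
have W_le : W <= 2 * beta * x.
  have := Rmult_le_compat_l (2 * beta) _ _ (ltac:(lra) : 0 <= 2 * beta) W_le_x.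
  by rewrite /Rdiv Rmult_comm Rmult_assoc Rinv_l; lra.
have x_ge0 : 0 <= x by nra.
have eps2_le : eps ^ 2 <= M * (2 * beta * x) by nra.
have [M_gt0 | <-] := Rle_lt_or_eq_dec 0 M (Rle_trans _ _ _ P_ge0 P_le_M).
  apply: (Rmult_le_reg_r (2 * beta * M)); first nra.
  by rewrite /Rdiv Rmult_assoc Rinv_l; nra.
by rewrite Rmult_0_r /Rdiv Rinv_0 Rmult_0_r.
Qed.

Theorem theoremD4 (Y Z : finType) (n : nat) (psi : Z -> vec n) (phi : Y -> vec n)
  (c : R) (V : Type) (openV : (V -> Prop) -> Prop) (S : V -> Y -> R)
  (D : vec n -> Prop) (h : vec n -> R) (gh : vec n -> vec n)
  (t : vec n -> V) (tinv : V -> vec n) (zsel : vec n -> Z) (beta : R) :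
  leq 2 #|Z| ->
  is_topology openV ->
  is_argmin_sel psi zsel ->
  phi_calibrated openV phi S D h gh t tinv ->
  injective psi ->
  0 < beta ->
  strongly_convex_on D h gh beta ->
  forall eps : R, 0 <= eps ->
  forall x : R, zeta_set psi phi c S zsel tinv eps x ->
    eps ^ 2 / (2 * beta * maxpsidiff psi) <= x.
Proof.
move=> Z_ge2 _ argmin calib _ beta_gt0 sconv eps eps_ge0 x [v [q [q_dist [regret_ge surr]]]].
have x_breg := calibrated_regret_breg calib q_dist surr.
have [_ [hull_D [_ [_ [_ [[tinv_D _] _]]]]]] := calib.
have Du : D (tinv v) by case: (tinv_D v).
have Dm : D (mu phi q) by apply: hull_D; exists q.
have [z0 gap] := regret_le_link_gap phi c (tinv v) (leq_trans (isT : leq 1 2) Z_ge2)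
                   argmin (proj2 q_dist).
apply: (combine_bounds eps_ge0 beta_gt0 (norm2sq_ge0 _)
          (norm2sq_ge0 (vsub (mu phi q) (tinv v))) _
          (cauchy_schwarz _ _) (maxpsidiff_ge psi (zsel (tinv v)) z0)).
- exact: Rle_trans (Rge_le _ _ regret_ge) gap.
- by rewrite x_breg; exact: (breg_ge_strongly_convex sconv Dm Du).
Qed.
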